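(* For any optiongraphs $\mathsf{C}$ and $\mathsf{D}$, $(\mathsf{C}+\mathsf{D})/{\bowtie_{\mathsf{C}+\mathsf{D}}}\cong(\mathsf{C}/{\bowtie_\mathsf{C}}+\mathsf{D}/{\bowtie_\mathsf{D}})/{\bowtie_{\mathsf{E}}}$, where $\mathsf{E}:=\mathsf{C}/{\bowtie_\mathsf{C}}+\mathsf{D}/{\bowtie_\mathsf{D}}$.
   Context: An optiongraph is a nonempty set $\mathsf{D}$ of positions with an option function $\mathrm{Opt}_\mathsf{D}:\mathsf{D}\to 2^{\mathsf{D}}$. A map is option preserving if $\mathrm{Opt}_\mathsf{D}(f(p))=f(\mathrm{Opt}_\mathsf{C}(p))$; an isomorphism ($\cong$) is a bijective option-preserving map. For an equivalence relation $\theta$, $[p]_\theta$ is the class of $p$ and $[S]_\theta:=\{[s]_\theta\mid s\in S\}$; $\theta$ is a congruence relation if $p\mathrel{\theta}q$ implies $[\mathrm{Opt}(p)]_\theta=[\mathrm{Opt}(q)]_\theta$. The quotient $\mathsf{D}/\theta$ has positions the $\theta$-classes and $\mathrm{Opt}([p]_\theta):=[\mathrm{Opt}_\mathsf{D}(p)]_\theta$. For an optiongraph $\mathsf{X}$, $\bowtie_\mathsf{X}$ is the union of all congruence relations on $\mathsf{X}$ (the maximum congruence). The sum $\mathsf{C}+\mathsf{D}$ is the optiongraph on $\mathsf{C}\times\mathsf{D}$ with $\mathrm{Opt}_{\mathsf{C}+\mathsf{D}}(p,q):=(\mathrm{Opt}_\mathsf{C}(p)\times\{q\})\cup(\{p\}\times\mathrm{Opt}_\mathsf{D}(q))$.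 *)

(* An optiongraph: a nonempty type of positions with an option relation;
   [opt p q] means q \in Opt(p). *)
Record optiongraph := OG {
  pos : Type;
  pos_inh : pos;
  opt : pos -> pos -> Prop
}.

Arguments opt {o} _ _.

Definition bijective_map {A B : Type} (f : A -> B) : Prop :=
  (forall x y, f x = f y -> x = y) /\ (forall y, exists x, f x = y).

Definition option_preserving (C D : optiongraph) (f : pos C -> pos D) : Prop :=
  forall p y, opt (f p) y <-> exists x, opt p x /\ f x = y.

Definition isomorphic (C D : optiongraph) : Prop :=
  exists f : pos C -> pos D, bijective_map f /\ option_preserving C D f.

Definition equivalence_rel {T : Type} (th : T -> T -> Prop) : Prop :=
  (forall x, th x x) /\ (forall x y, th x y -> th y x) /\
  (forall x y z, th x y -> th y z -> th x z).

Definition cls {T : Type} (th : T -> T -> Prop) (p : T) : T -> Prop := th p.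

Definition img_cls {T : Type} (th : T -> T -> Prop) (S : T -> Prop)
  : (T -> Prop) -> Prop := fun A => exists s, S s /\ A = cls th s.

Definition congruence (X : optiongraph) (th : pos X -> pos X -> Prop) : Prop :=
  equivalence_rel th /\
  forall p q, th p q ->
    forall A, img_cls th (opt p) A <-> img_cls th (opt q) A.

Definition bowtie (X : optiongraph) : pos X -> pos X -> Prop :=
  fun p q => exists th, congruence X th /\ th p q.

Definition qpos (X : optiongraph) (th : pos X -> pos X -> Prop) : Type :=
  { A : pos X -> Prop | exists p, A = cls th p }.

(* Opt([p]) := [Opt(p)]; stated as the union over representatives p of the
   class, which coincides with [Opt(p)] for any p when theta is a congruence. *)
Definition qopt (X : optiongraph) (th : pos X -> pos X -> Prop)
  (A B : qpos X th) : Prop :=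
  exists p, proj1_sig A p /\ exists q, opt p q /\ proj1_sig B = cls th q.

Definition quotient (X : optiongraph) (th : pos X -> pos X -> Prop) : optiongraph :=
  OG (qpos X th)
     (exist _ (cls th (pos_inh X)) (ex_intro _ (pos_inh X) eq_refl))
     (qopt X th).

Definition sum_opt (C D : optiongraph) (x y : pos C * pos D) : Prop :=
  (opt (fst x) (fst y) /\ snd y = snd x) \/
  (fst y = fst x /\ opt (snd x) (snd y)).

Definition ogsum (C D : optiongraph) : optiongraph :=
  OG (pos C * pos D)%type (pos_inh C, pos_inh D) (sum_opt C D).

(* The maximum congruence of an optiongraph is bisimilarity.  The map
   (c, d) |-> ([c], [d]) from C + D onto C/~ + D/~ is a surjective
   option-preserving map, being the sum of two canonical projections; such
   maps preserve and reflect bisimilarity, hence induce an isomorphism of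
   the quotients by bisimilarity. *)

From Stdlib Require Import FunctionalExtensionality PropExtensionality
  ProofIrrelevance ClassicalEpsilon.

Definition bisimulation (X : optiongraph) (R : pos X -> pos X -> Prop) : Prop :=
  forall p q, R p q ->
    (forall x, opt p x -> exists y, opt q y /\ R x y) /\
    (forall y, opt q y -> exists x, opt p x /\ R x y).

Definition bisimilar (X : optiongraph) (p q : pos X) : Prop :=
  exists R, bisimulation X R /\ R p q.

Section Bisimilarity.

Variable X : optiongraph.

Lemma bisimilar_refl (p : pos X) : bisimilar X p p.
Proof.
  exists eq; split; [|reflexivity].
  intros a b <-; split; intros z Hz; exists z; auto.
Qed.

Lemma bisimilar_sym (p q : pos X) : bisimilar X p q -> bisimilar X q p.
Proof.
  intros [R [HR Hpq]]; exists (fun a b => R b a); split; [|exact Hpq].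
  intros a b Hba; destruct (HR _ _ Hba) as [Hfw Hbw]; split.
  - intros x Hx; destruct (Hbw x Hx) as [y [Hy Ryx]]; eauto.
  - intros y Hy; destruct (Hfw y Hy) as [x [Hx Ryx]]; eauto.
Qed.

Lemma bisimilar_trans (p q r : pos X) :
  bisimilar X p q -> bisimilar X q r -> bisimilar X p r.
Proof.
  intros [R1 [H1 Hpq]] [R2 [H2 Hqr]].
  exists (fun a c => exists b, R1 a b /\ R2 b c); split; [|eauto].
  intros a c [b [Hab Hbc]].
  destruct (H1 _ _ Hab) as [A1 A2], (H2 _ _ Hbc) as [B1 B2]; split.
  - intros x Hx; destruct (A1 x Hx) as [y [Hy Rxy]].
    destruct (B1 y Hy) as [z [Hz Ryz]]; eauto.
  - intros z Hz; destruct (B2 z Hz) as [y [Hy Ryz]].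
    destruct (A2 y Hy) as [x [Hx Rxy]]; eauto.
Qed.

Lemma bisimilar_equivalence : equivalence_rel (bisimilar X).
Proof.
  split; [exact bisimilar_refl|].
  split; [exact bisimilar_sym | exact bisimilar_trans].
Qed.

Lemma bisimulation_bisimilar : bisimulation X (bisimilar X).
Proof.
  intros p q [R [HR Hpq]]; destruct (HR _ _ Hpq) as [Hfw Hbw]; split.
  - intros x Hx; destruct (Hfw x Hx) as [y [Hy Rxy]].
    exists y; split; [exact Hy | exists R; auto].
  - intros y Hy; destruct (Hbw y Hy) as [x [Hx Rxy]].
    exists x; split; [exact Hx | exists R; auto].
Qed.

Lemma cls_bisimilarE (p q : pos X) :
  cls (bisimilar X) p = cls (bisimilar X) q <-> bisimilar X p q.
Proof.
  split.
  - intros Epq; change (cls (bisimilar X) p q); rewrite Epq; apply bisimilar_refl.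
  - intros Hpq; extensionality z; apply propositional_extensionality; split.
    + apply bisimilar_trans, bisimilar_sym, Hpq.
    + apply bisimilar_trans, Hpq.
Qed.

Lemma congruence_bisimulation (th : pos X -> pos X -> Prop) :
  congruence X th -> bisimulation X th.
Proof.
  intros [[th_refl _] th_cong] a b Hab; split.
  - intros x Hx.
    destruct (proj1 (th_cong a b Hab (cls th x)) (ex_intro _ x (conj Hx eq_refl)))
      as [y [Hy Exy]].
    exists y; split; [exact Hy|].
    change (cls th x y); rewrite Exy; apply th_refl.
  - intros y Hy.
    destruct (proj2 (th_cong a b Hab (cls th y)) (ex_intro _ y (conj Hy eq_refl)))
      as [x [Hx Eyx]].
    exists x; split; [exact Hx|].
    change (cls th x y); rewrite <- Eyx; apply th_refl.
Qed.

Lemma congruence_bisimilar : congruence X (bisimilar X).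
Proof.
  split; [exact bisimilar_equivalence|].
  intros a b Hab A; split.
  - intros [x [Hx ->]].
    destruct (proj1 (bisimulation_bisimilar a b Hab) x Hx) as [y [Hy Rxy]].
    exists y; split; [exact Hy | apply cls_bisimilarE, Rxy].
  - intros [y [Hy ->]].
    destruct (proj2 (bisimulation_bisimilar a b Hab) y Hy) as [x [Hx Rxy]].
    exists x; split; [exact Hx | apply cls_bisimilarE, bisimilar_sym, Rxy].
Qed.

Lemma bowtie_bisimilar : bowtie X = bisimilar X.
Proof.
  extensionality p; extensionality q; apply propositional_extensionality; split.
  - intros [th [Hth Hpq]]; exists th; split; [apply congruence_bisimulation|]; auto.
  - intros Hpq; exists (bisimilar X); split; [exact congruence_bisimilar | exact Hpq].
Qed.

Definition qclass (p : pos X) : pos (quotient X (bisimilar X)) :=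
  exist _ (cls (bisimilar X) p) (ex_intro _ p eq_refl).

Lemma qclass_eq (p q : pos X) : qclass p = qclass q <-> bisimilar X p q.
Proof.
  rewrite <- cls_bisimilarE; split.
  - intros Epq; exact (f_equal (@proj1_sig _ _) Epq).
  - intros Epq; apply subset_eq_compat, Epq.
Qed.

Lemma qclass_surj (A : pos (quotient X (bisimilar X))) : exists p, qclass p = A.
Proof.
  destruct A as [A [p ->]]; exists p; apply subset_eq_compat; reflexivity.
Qed.

Lemma opt_qclass (p q : pos X) :
  opt (qclass p) (qclass q) <-> exists x, opt p x /\ bisimilar X x q.
Proof.
  cbn [opt quotient qopt qclass proj1_sig]; split.
  - intros [p' [Hpp' [x [Hx Eqx]]]].
    destruct (proj2 (bisimulation_bisimilar p p' Hpp') x Hx) as [y [Hy Ryx]].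
    exists y; split; [exact Hy|].
    apply bisimilar_trans with x; [exact Ryx|].
    apply cls_bisimilarE; symmetry; exact Eqx.
  - intros [x [Hx Hxq]]; exists p; split; [apply bisimilar_refl|].
    exists x; split; [exact Hx | apply cls_bisimilarE, bisimilar_sym, Hxq].
Qed.

Lemma qclass_option_preserving : option_preserving X (quotient X (bisimilar X)) qclass.
Proof.
  intros p B; destruct (qclass_surj B) as [q <-]; rewrite opt_qclass.
  split; intros [x [Hx Hxq]]; exists x; split; auto; apply qclass_eq; auto.
Qed.

End Bisimilarity.

Section OptionPreserving.

Variables (X Y : optiongraph) (f : pos X -> pos Y).
Hypothesis f_op : option_preserving X Y f.

Lemma option_preserving_bisimilarE (p q : pos X) :
  bisimilar Y (f p) (f q) <-> bisimilar X p q.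
Proof.
  split.
  - intros Hfpq; exists (fun a b => bisimilar Y (f a) (f b)); split; [|exact Hfpq].
    intros a b Hab; destruct (bisimulation_bisimilar Y _ _ Hab) as [Hfw Hbw]; split.
    + intros x Hx; destruct (Hfw (f x)) as [y' [Hy' Rxy]]; [apply f_op; eauto|].
      apply f_op in Hy'; destruct Hy' as [y [Hy <-]]; eauto.
    + intros y Hy; destruct (Hbw (f y)) as [x' [Hx' Rxy]]; [apply f_op; eauto|].
      apply f_op in Hx'; destruct Hx' as [x [Hx <-]]; eauto.
  - intros Hpq.
    exists (fun u v => exists a b, f a = u /\ f b = v /\ bisimilar X a b).
    split; [|eauto 6].
    intros u v [a [b [<- [<- Hab]]]].
    destruct (bisimulation_bisimilar X a b Hab) as [Hfw Hbw]; split.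
    + intros u' Hu'; apply f_op in Hu'; destruct Hu' as [x [Hx <-]].
      destruct (Hfw x Hx) as [y [Hy Rxy]].
      exists (f y); split; [apply f_op; eauto | eauto 6].
    + intros v' Hv'; apply f_op in Hv'; destruct Hv' as [y [Hy <-]].
      destruct (Hbw y Hy) as [x [Hx Rxy]].
      exists (f x); split; [apply f_op; eauto | eauto 6].
Qed.

Lemma quotient_map_exists :
  exists g : pos (quotient X (bisimilar X)) -> pos (quotient Y (bisimilar Y)),
    forall p, g (qclass X p) = qclass Y (f p).
Proof.
  exists (fun A : qpos X (bisimilar X) => qclass Y (f (proj1_sig
            (constructive_indefinite_description _ (proj2_sig A))))).
  intros p; destruct (constructive_indefinite_description _ _) as [r Er]; simpl.
  apply qclass_eq, option_preserving_bisimilarE, cls_bisimilarE.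
  symmetry; exact Er.
Qed.

Lemma isomorphic_quotient_of_surjective :
  (forall y, exists x, f x = y) ->
  isomorphic (quotient X (bisimilar X)) (quotient Y (bisimilar Y)).
Proof.
  intros f_surj; destruct quotient_map_exists as [g g_qclass].
  exists g; split; [split|].
  - intros A B Eg.
    destruct (qclass_surj X A) as [p <-], (qclass_surj X B) as [q <-].
    rewrite !g_qclass, qclass_eq, option_preserving_bisimilarE in Eg.
    apply qclass_eq, Eg.
  - intros B; destruct (qclass_surj Y B) as [y <-], (f_surj y) as [x <-].
    exists (qclass X x); apply g_qclass.
  - intros A B; destruct (qclass_surj X A) as [p <-], (qclass_surj Y B) as [y <-].
    rewrite g_qclass, opt_qclass; split.
    + intros [fx [Hfx Rxy]]; apply f_op in Hfx; destruct Hfx as [x [Hx <-]].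
      exists (qclass X x); split.
      * apply opt_qclass; exists x; split; [exact Hx | apply bisimilar_refl].
      * rewrite g_qclass; apply qclass_eq, Rxy.
    + intros [B [HB Eg]]; destruct (qclass_surj X B) as [x' <-].
      rewrite g_qclass, qclass_eq in Eg.
      apply opt_qclass in HB; destruct HB as [x [Hx Rxx']].
      exists (f x); split; [apply f_op; eauto|].
      apply bisimilar_trans with (f x'); [apply option_preserving_bisimilarE|]; auto.
Qed.

End OptionPreserving.

Lemma ogsum_option_preserving (C C' D D' : optiongraph)
  (f : pos C -> pos C') (g : pos D -> pos D') :
  option_preserving C C' f -> option_preserving D D' g ->
  option_preserving (ogsum C D) (ogsum C' D') (fun x => (f (fst x), g (snd x))).
Proof.
  intros f_op g_op [c d] [c' d']; cbn [opt ogsum]; unfold sum_opt; simpl; split.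
  - intros [[Hc ->] | [-> Hd]].
    + apply f_op in Hc; destruct Hc as [x [Hx <-]]; exists (x, d); simpl; auto.
    + apply g_op in Hd; destruct Hd as [y [Hy <-]]; exists (c, y); simpl; auto.
  - intros [[x y] [Hxy Efg]]; simpl in *; injection Efg as <- <-.
    destruct Hxy as [[Hx ->] | [-> Hy]].
    + left; split; [apply f_op; eauto | reflexivity].
    + right; split; [reflexivity | apply g_op; eauto].
Qed.

Theorem mainTheorem20 (C D : optiongraph) :
  isomorphic (quotient (ogsum C D) (bowtie (ogsum C D)))
    (let E := ogsum (quotient C (bowtie C)) (quotient D (bowtie D)) in
     quotient E (bowtie E)).
Proof.
  cbv zeta; rewrite !bowtie_bisimilar.
  apply isomorphic_quotient_of_surjective
    with (f := fun x => (qclass C (fst x), qclass D (snd x))).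
  - apply ogsum_option_preserving; apply qclass_option_preserving.
  - intros [A B].
    destruct (qclass_surj C A) as [c <-], (qclass_surj D B) as [d <-].
    exists (c, d); reflexivity.
Qed.
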